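(* Let $\mathbf X$ be a coin process with $\underline H(\mathbf X)>0$ and $\mathbf Y$ any target process. Then \[ R^\star_{\mathrm{int}}(\mathbf X,\mathbf Y)\le\frac{\overline H(\mathbf Y)}{\underline H(\mathbf X)}, \qquad R^\star(\mathbf X,\mathbf Y)\ge\max\Big[\frac{\overline H(\mathbf Y)}{\overline H(\mathbf X)},\frac{\underline H(\mathbf Y)}{\underline H(\mathbf X)}\Big]. \]
   Context: Logarithms are base 2. $\mathcal X$, $\mathcal Y$ are finite sets; $\mathbf X=\{X^m\}$ (coin) and $\mathbf Y=\{Y^n\}$ (target) are arbitrary processes given by consistent families of distributions. Spectral sup- and inf-entropy: $\overline H(\mathbf X)=\inf\{\lambda:\lim_{n\to\infty}\Pr(\frac1n\log\frac{1}{P_{X^n}(X^n)}\ge\lambda)=0\}$, $\underline H(\mathbf X)=\sup\{\lambda:\lim_{n\to\infty}\Pr(\frac1n\log\frac{1}{P_{X^n}(X^n)}\le\lambda)=0\}$, and likewise for $\mathbf Y$. A random number generation algorithm for $Y^n$ is a map $\phi:\bigcup_{i\ge0}\mathcal X^i\to\{\bot\}\cup\mathcal Y^n$; its leaves are the finite sequences $s$ with $\phi(s)\in\mathcal Y^n$ and $\phi(s')=\bot$ for all proper prefixes $s'$; it is required to satisfy the validity condition $\sum_{\text{leaves } s:\phi(s)=y^n}P_{X^{|s|}}(s)=P_{Y^n}(y^n)$ for all $y^n$. Its stopping time is the length of the (first) leaf reached by $X_1,X_2,\dots$ ($\infty$ if none). For a sequence of algorithms $\phi_n$ ($n=1,2,\dots$)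 generating $Y^n$ with stopping times $T_n$, a rate $R\ge0$ is achievable if $\lim_{n\to\infty}\Pr(T_n>nR)=0$. $R^\star(\mathbf X,\mathbf Y)$ is the infimum of rates achievable by some sequence of valid algorithms, and $R^\star_{\mathrm{int}}(\mathbf X,\mathbf Y)$ the infimum of rates achievable when $\phi_n$ is the interval algorithm. Interval algorithm: for $s\in\mathcal X^i$ define $\mathcal I_s=[\underline\alpha_s,\overline\alpha_s)$ by $\mathcal I_\bot=[0,1)$ and $\underline\alpha_{sx}=\underline\alpha_s+(\overline\alpha_s-\underline\alpha_s)\sum_{k<x}P_{X_{i+1}|X^i}(k|s)$, $\overline\alpha_{sx}=\underline\alpha_s+(\overline\alpha_s-\underline\alpha_s)\sum_{k\le x}P_{X_{i+1}|X^i}(k|s)$ (identifying $\mathcal X=\{1,\dots,M\}$); define $\mathcal J_t$, $t\in\mathcal Y^j$, likewise from $P_{Y_{j+1}|Y^j}$; the algorithm stops at the first $m$ with $\mathcal I_{X^m}\subseteq\mathcal J_{y^n}$ for some $y^n\in\mathcal Y^n$ and outputs that $y^n$. *)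

From Stdlib Require Import Reals Lra Lia List Arith Bool ClassicalEpsilon.
Import ListNotations.
Open Scope R_scope.

(** Alphabets: a finite set of size M is identified with {0,...,M-1};
    finite sequences are [list nat]. *)

Definition lsum {A : Type} (f : A -> R) (l : list A) : R :=
  fold_right (fun a acc => f a + acc) 0 l.

Fixpoint words (M n : nat) : list (list nat) :=
  match n with
  | O => [[]]
  | S k => flat_map (fun s => map (fun x => s ++ [x]) (seq 0 M)) (words M k)
  end.

(** A process over {0,...,M-1}, given by a consistent family of
    distributions: P s = P_{X^{|s|}}(s). *)
Definition is_process (M : nat) (P : list nat -> R) : Prop :=
  P [] = 1 /\ (forall s, 0 <= P s) /\
  (forall s, lsum (fun x => P (s ++ [x])) (seq 0 M) = P s).

Definition log2 (x : R) : R := ln x / ln 2.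

Definition PrGe (M : nat) (P : list nat -> R) (n : nat) (lam : R) : R :=
  lsum (fun s => if Rlt_dec 0 (P s) then
                   if Rle_dec lam (/ INR n * log2 (/ P s)) then P s else 0
                 else 0) (words M n).
Definition PrLe (M : nat) (P : list nat -> R) (n : nat) (lam : R) : R :=
  lsum (fun s => if Rlt_dec 0 (P s) then
                   if Rle_dec (/ INR n * log2 (/ P s)) lam then P s else 0
                 else 0) (words M n).

Definition is_inf (S : R -> Prop) (h : R) : Prop :=
  (forall x, S x -> h <= x) /\ (forall b, (forall x, S x -> b <= x) -> b <= h).
Definition is_sup (S : R -> Prop) (h : R) : Prop :=
  (forall x, S x -> x <= h) /\ (forall b, (forall x, S x -> x <= b) -> h <= b).

Definition is_sup_entropy (M : nat) (P : list nat -> R) (h : R) : Prop :=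
  is_inf (fun lam => Un_cv (fun n => PrGe M P n lam) 0) h.
Definition is_inf_entropy (M : nat) (P : list nat -> R) (h : R) : Prop :=
  is_sup (fun lam => Un_cv (fun n => PrLe M P n lam) 0) h.

(** "inf S <= r" and "inf S >= r" for the infimum in the extended reals
    (inf of the empty set = +infinity), written out literally. *)
Definition inf_le (S : R -> Prop) (r : R) : Prop :=
  forall eps, 0 < eps -> exists x, S x /\ x < r + eps.
Definition inf_ge (S : R -> Prop) (r : R) : Prop :=
  forall x, S x -> r <= x.

(** Random number generation algorithms: None stands for ⊥. *)
Definition algo := list nat -> option (list nat).

Definition is_noneb (o : option (list nat)) : bool :=
  match o with None => true | Some _ => false end.

Definition leafb (phi : algo) (s : list nat) : bool :=
  andb (negb (is_noneb (phi s)))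
   (forallb (fun j => is_noneb (phi (firstn j s))) (seq 0 (length s))).

Definition outputs (phi : algo) (s y : list nat) : bool :=
  match phi s with
  | Some y' => if list_eq_dec Nat.eq_dec y' y then true else false
  | None => false
  end.

(** phi is a valid algorithm generating Y^n from X:
    phi maps into {⊥} ∪ Y^n, and for every y^n the total coin
    probability of the leaves outputting y^n equals P_Y(y^n)
    (the sum over all leaves, organised by leaf length i). *)
Definition valid_algo (Mx My : nat) (PX PY : list nat -> R) (n : nat)
    (phi : algo) : Prop :=
  (forall s y, phi s = Some y -> In y (words My n)) /\
  (forall y, In y (words My n) ->
     infinite_sum
       (fun i => lsum (fun s => if andb (leafb phi s) (outputs phi s y)
                                then PX s else 0) (words Mx i))
       (PY y)).

Definition nfloor (x : R) : nat := Z.to_nat (Int_part x).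

(** Pr(T > x), where T is the stopping time of phi (T = length of the
    first leaf reached, infinity if none): T > x iff T > floor x iff no
    prefix of X^{floor x} (including itself) is a leaf, i.e. phi gives ⊥
    on every such prefix. *)
Definition PrT_gt (Mx : nat) (PX : list nat -> R) (phi : algo) (x : R) : R :=
  lsum (fun s => if forallb (fun j => is_noneb (phi (firstn j s)))
                          (seq 0 (S (length s)))
                 then PX s else 0) (words Mx (nfloor x)).

Definition achievable (Mx : nat) (PX : list nat -> R) (phi : nat -> algo)
    (Rt : R) : Prop :=
  0 <= Rt /\ Un_cv (fun n => PrT_gt Mx PX (phi n) (INR n * Rt)) 0.

(** rates achievable by some sequence of valid algorithms; R* is their inf *)
Definition opt_rates (Mx My : nat) (PX PY : list nat -> R) (Rt : R) : Prop :=
  exists phi : nat -> algo,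
    (forall n, valid_algo Mx My PX PY n (phi n)) /\ achievable Mx PX phi Rt.

(** Interval algorithm. ivl P s = (lower, upper) end of I_s, with
    conditional probabilities P(k|pre) = P(pre ++ [k]) / P(pre). *)
Fixpoint ivl_aux (P : list nat -> R) (pre s : list nat) (lo hi : R) : R * R :=
  match s with
  | [] => (lo, hi)
  | x :: t =>
      let w := hi - lo in
      let c := fun k => P (pre ++ [k]) / P pre in
      ivl_aux P (pre ++ [x]) t (lo + w * lsum c (seq 0 x))
                               (lo + w * lsum c (seq 0 (S x)))
  end.
Definition ivl (P : list nat -> R) (s : list nat) : R * R := ivl_aux P [] s 0 1.

Definition subintb (a b c d : R) : bool :=
  if excluded_middle_informative (forall t, a <= t < b -> c <= t < d)
  then true else false.

Definition interval_alg (My n : nat) (PX PY : list nat -> R) : algo :=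
  fun s => let '(a, b) := ivl PX s in
           find (fun y => let '(c, d) := ivl PY y in subintb a b c d)
                (words My n).

(** rates achievable by the interval algorithm; R*_int is their inf *)
Definition int_rates (Mx My : nat) (PX PY : list nat -> R) (Rt : R) : Prop :=
  achievable Mx PX (fun n => interval_alg My n PX PY) Rt.

(* Both bounds compare the information spectra of X and Y through the
   interval picture.  For a valid algorithm, a coin prefix s after which the
   output y is determined has P_X(s) <= P_Y(y).  Hence outputs of probability
   at most 2^(-n lY) come from coin prefixes of probability at most 2^(-n lY)
   < 2^(-m lX), and stopped coin prefixes of probability at least 2^(-m lX)
   yield outputs of probability above 2^(-n lY); at rates below either ratio
   this forces a spectral probability that should not vanish to vanish.
   For the interval algorithm, an undecided prefix s of length m ~ nR has
   I_s inside no J_y.  Unless y is unlikely or s is likely (both rare above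
   the spectral entropies), I_s is shorter than 2^(-m lX) while J_y is longer
   than 2^(-n lY), so I_s straddles an endpoint of J_y; summing, this has
   probability at most 4 2^(-m lX + n lY), which vanishes when R lX > lY. *)

From Stdlib Require Import Reals Lra Lia List Bool ClassicalEpsilon ZArith.
Import ListNotations.
Open Scope R_scope.

(** * Finite sums, words and processes *)

Section ListSums.
Context {A : Type}.
Implicit Types (f g : A -> R) (l : list A).

Lemma lsum_app f l1 l2 : lsum f (l1 ++ l2) = lsum f l1 + lsum f l2.
Proof. induction l1 as [|a l1 IH]; simpl; [lra|]. rewrite IH; lra. Qed.

Lemma lsum_ext f g l : (forall x, In x l -> f x = g x) -> lsum f l = lsum g l.
Proof. induction l as [|a l IH]; simpl; intros H; [reflexivity|]. rewrite H, IH; auto. Qed.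

Lemma lsum_le f g l : (forall x, In x l -> f x <= g x) -> lsum f l <= lsum g l.
Proof.
  induction l as [|a l IH]; simpl; intros H; [lra|].
  pose proof (H a (or_introl eq_refl)). pose proof (IH (fun x h => H x (or_intror h))). lra.
Qed.

Lemma lsum_0 l : lsum (fun _ => 0) l = 0.
Proof. induction l as [|a l IH]; simpl; [reflexivity|]. rewrite IH; lra. Qed.

Lemma lsum_eq0 f l : (forall x, In x l -> f x = 0) -> lsum f l = 0.
Proof. intros H. rewrite <- (lsum_0 l). apply lsum_ext; auto. Qed.

Lemma lsum_ge0 f l : (forall x, In x l -> 0 <= f x) -> 0 <= lsum f l.
Proof. intros H. rewrite <- (lsum_0 l). apply lsum_le; auto. Qed.

Lemma lsum_add f g l : lsum (fun x => f x + g x) l = lsum f l + lsum g l.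
Proof. induction l as [|a l IH]; simpl; [lra|]. rewrite IH; lra. Qed.

Lemma lsum_mull k f l : lsum (fun x => k * f x) l = k * lsum f l.
Proof. induction l as [|a l IH]; simpl; [lra|]. rewrite IH; lra. Qed.

Lemma lsum_mulr k f l : lsum (fun x => f x * k) l = lsum f l * k.
Proof. induction l as [|a l IH]; simpl; [lra|]. rewrite IH; lra. Qed.

Lemma lsum_if (b : bool) f l : lsum (fun x => if b then f x else 0) l = if b then lsum f l else 0.
Proof. destruct b; [reflexivity|apply lsum_0]. Qed.

Lemma lsum_ge_term f l a : In a l -> (forall x, In x l -> 0 <= f x) -> f a <= lsum f l.
Proof.
  intros Ha H. induction l as [|b l IH]; simpl in *; [contradiction|].
  assert (Hl : forall x, In x l -> 0 <= f x) by auto.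
  destruct Ha as [<-|Ha].
  - pose proof (lsum_ge0 f l Hl). lra.
  - pose proof (H b (or_introl eq_refl)). pose proof (IH Ha Hl). lra.
Qed.

Lemma lsum_map {B} (f : B -> R) (g : A -> B) l : lsum f (map g l) = lsum (fun x => f (g x)) l.
Proof. induction l as [|a l IH]; simpl; [reflexivity|]. rewrite IH; reflexivity. Qed.

End ListSums.

Lemma lsum_flat_map {A B} (f : B -> R) (g : A -> list B) l :
  lsum f (flat_map g l) = lsum (fun x => lsum f (g x)) l.
Proof. induction l as [|a l IH]; [reflexivity|]. cbn [flat_map]. rewrite lsum_app, IH. reflexivity. Qed.

Lemma lsum_comm {A B} (f : A -> B -> R) l1 l2 :
  lsum (fun a => lsum (fun b => f a b) l2) l1 = lsum (fun b => lsum (fun a => f a b) l1) l2.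
Proof.
  induction l1 as [|a l1 IH]; simpl; [rewrite lsum_0; reflexivity|].
  rewrite IH, <- lsum_add. reflexivity.
Qed.

Lemma lsum_words_S M k (f : list nat -> R) :
  lsum f (words M (S k)) = lsum (fun s => lsum (fun x => f (s ++ [x])) (seq 0 M)) (words M k).
Proof. simpl. rewrite lsum_flat_map. apply lsum_ext; intros. apply lsum_map. Qed.

Lemma words_S_inv M k t : In t (words M (S k)) ->
  exists s x, t = s ++ [x] /\ In s (words M k) /\ (x < M)%nat.
Proof.
  simpl. intros H. apply in_flat_map in H as [s [Hs Ht]].
  apply in_map_iff in Ht as [x [<- Hx]]. apply in_seq in Hx.
  exists s, x; repeat split; auto; lia.
Qed.

Section Process.
Context {M : nat} {P : list nat -> R} (hP : is_process M P).

Lemma process_ge0 s : 0 <= P s.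
Proof. exact (proj1 (proj2 hP) s). Qed.

Lemma process_children s : lsum (fun x => P (s ++ [x])) (seq 0 M) = P s.
Proof. exact (proj2 (proj2 hP) s). Qed.

Lemma process_total n : lsum P (words M n) = 1.
Proof.
  induction n as [|n IH]; [simpl; rewrite (proj1 hP); lra|].
  rewrite lsum_words_S, <- IH. apply lsum_ext. intros; apply process_children.
Qed.

Lemma process_child_le s x : (x < M)%nat -> P (s ++ [x]) <= P s.
Proof.
  intros Hx. rewrite <- (process_children s).
  apply (lsum_ge_term (fun x => P (s ++ [x]))); [apply in_seq; lia|intros; apply process_ge0].
Qed.

Lemma process_le1 n s : In s (words M n) -> P s <= 1.
Proof.
  intros Hs. rewrite <- (process_total n). apply lsum_ge_term; auto. intros; apply process_ge0.
Qed.

Lemma process_mass_split n (B : list nat -> bool) :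
  lsum (fun s => if B s then P s else 0) (words M n)
  + lsum (fun s => if negb (B s) then P s else 0) (words M n) = 1.
Proof.
  rewrite <- (process_total n), <- lsum_add. apply lsum_ext. intros s _. destruct (B s); simpl; lra.
Qed.

End Process.

(** * Real numbers and sequences *)

Lemma Rpower2_le_iff x y : Rpower 2 x <= Rpower 2 y <-> x <= y.
Proof.
  split; [|apply Rle_Rpower; lra].
  intros H. destruct (Rle_or_lt x y) as [|Hlt]; auto.
  pose proof (Rpower_lt 2 y x ltac:(lra) Hlt). lra.
Qed.

Lemma Rpower2_log2 p : 0 < p -> Rpower 2 (log2 p) = p.
Proof.
  intros Hp. unfold Rpower, log2. pose proof (ln_lt_2).
  replace (ln p / ln 2 * ln 2) with (ln p) by (field; lra). apply exp_ln, Hp.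
Qed.

Lemma log2_le_iff p x : 0 < p -> log2 p <= x <-> p <= Rpower 2 x.
Proof. intros Hp. rewrite <- Rpower2_le_iff, Rpower2_log2 by exact Hp. reflexivity. Qed.

Lemma log2_ge_iff p x : 0 < p -> x <= log2 p <-> Rpower 2 x <= p.
Proof. intros Hp. rewrite <- Rpower2_le_iff, Rpower2_log2 by exact Hp. reflexivity. Qed.

Lemma le_div_iff a b c : 0 < c -> a <= b / c <-> a * c <= b.
Proof.
  intros Hc. replace b with (b / c * c) at 2 by (field; lra).
  split; intros H; [apply Rmult_le_compat_r|apply Rmult_le_reg_r with c]; lra.
Qed.

Lemma div_le_iff a b c : 0 < c -> b / c <= a <-> b <= a * c.
Proof.
  intros Hc. replace b with (b / c * c) at 2 by (field; lra).
  split; intros H; [apply Rmult_le_compat_r|apply Rmult_le_reg_r with c]; lra.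
Qed.

Lemma lt_div_iff a b c : 0 < c -> a < b / c <-> a * c < b.
Proof.
  intros Hc. replace b with (b / c * c) at 2 by (field; lra).
  split; intros H; [apply Rmult_lt_compat_r|apply Rmult_lt_reg_r with c]; lra.
Qed.

Lemma div_lt_iff a b c : 0 < c -> b / c < a <-> b < a * c.
Proof.
  intros Hc. replace b with (b / c * c) at 2 by (field; lra).
  split; intros H; [apply Rmult_lt_compat_r|apply Rmult_lt_reg_r with c]; lra.
Qed.

Lemma Rpower2_neg_lt n m x y : INR m * x < INR n * y ->
  Rpower 2 (- (INR n * y)) < Rpower 2 (- (INR m * x)).
Proof. intros H. apply Rpower_lt; lra. Qed.

Lemma Un_cv0_le (u v : nat -> R) :
  (exists N, forall n, (N <= n)%nat -> 0 <= u n <= v n) -> Un_cv v 0 -> Un_cv u 0.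
Proof.
  intros [N HN] Hv eps He. destruct (Hv eps He) as [N' HN'].
  exists (Nat.max N N'). intros n Hn.
  specialize (HN n ltac:(lia)). specialize (HN' n ltac:(lia)). unfold R_dist in *.
  rewrite Rminus_0_r in *. rewrite Rabs_right in * by lra. lra.
Qed.

Lemma Un_cv0_plus (u v : nat -> R) : Un_cv u 0 -> Un_cv v 0 -> Un_cv (fun n => u n + v n) 0.
Proof. intros Hu Hv. rewrite <- (Rplus_0_r 0). apply CV_plus; assumption. Qed.

Lemma Un_cv_comp (u : nat -> R) (g : nat -> nat) l : Un_cv u l ->
  (forall K, exists N, forall n, (N <= n)%nat -> (K <= g n)%nat) -> Un_cv (fun n => u (g n)) l.
Proof.
  intros Hu Hg eps He. destruct (Hu eps He) as [N1 H1]. destruct (Hg N1) as [N2 H2].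
  exists N2. intros n Hn. apply H1. exact (H2 n Hn).
Qed.

Lemma not_Un_cv0_ge1 (u : nat -> R) : (forall n, (1 <= n)%nat -> 1 <= u n) -> ~ Un_cv u 0.
Proof.
  intros H Hc. destruct (Hc (1/2)) as [N HN]; [lra|].
  specialize (HN (S N) ltac:(lia)). specialize (H (S N) ltac:(lia)).
  unfold R_dist in HN. rewrite Rminus_0_r, Rabs_right in HN by lra. lra.
Qed.

Lemma Rpower2_affine_cv0 c a b : a < 0 -> Un_cv (fun n => c * Rpower 2 (a * INR n + b)) 0.
Proof.
  intros Ha. assert (Hq : 0 < Rpower 2 a < 1).
  { split; [apply exp_pos|]. rewrite <- (Rpower_O 2) by lra. apply Rpower_lt; lra. }
  set (K := Rabs c * Rpower 2 b + 1).
  assert (HK : 0 < K)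
    by (apply Rplus_le_lt_0_compat; [apply Rmult_le_pos; [apply Rabs_pos|left; apply exp_pos]|lra]).
  intros eps He.
  destruct (pow_lt_1_zero (Rpower 2 a) ltac:(rewrite Rabs_right; lra) (eps / K)) as [N HN];
    [apply Rdiv_lt_0_compat; lra|].
  exists N. intros n Hn. specialize (HN n Hn). unfold R_dist. rewrite Rminus_0_r.
  rewrite Rpower_plus, <- Rpower_mult, Rpower_pow by apply exp_pos.
  pose proof (pow_lt (Rpower 2 a) n (proj1 Hq)). pose proof (exp_pos (b * ln 2)).
  rewrite Rabs_right in HN by lra. apply (Rmult_lt_compat_l K) in HN; [|lra].
  replace (K * (eps / K)) with eps in HN by (field; lra).
  rewrite !Rabs_mult, (Rabs_right (Rpower 2 a ^ n)), (Rabs_right (Rpower 2 b)) by (unfold Rpower in *; lra).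
  unfold K in HN. pose proof (Rabs_pos c). unfold Rpower in *. nra.
Qed.

Lemma nfloor_spec x : 0 <= x -> INR (nfloor x) <= x /\ x - 1 < INR (nfloor x).
Proof.
  intros Hx. destruct (base_Int_part x) as [H1 H2]. unfold nfloor.
  assert (Hz : (0 <= Int_part x)%Z).
  { assert (IZR (-1) < IZR (Int_part x)) by (simpl; lra). apply lt_IZR in H. lia. }
  rewrite INR_IZR_INZ, Z2Nat.id by exact Hz. lra.
Qed.

Lemma nfloor_le x m : 0 <= x -> x <= INR m -> (nfloor x <= m)%nat.
Proof. intros H1 H2. apply INR_le. pose proof (nfloor_spec x H1). lra. Qed.

Lemma nfloor_0 : nfloor 0 = 0%nat.
Proof. apply Nat.le_0_r, nfloor_le; simpl; lra. Qed.

Lemma INR_eventually_ge r : exists N, forall m, (N <= m)%nat -> r <= INR m.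
Proof.
  exists (S (nfloor (Rmax r 0))). intros m Hm. apply le_INR in Hm. rewrite S_INR in Hm.
  pose proof (nfloor_spec (Rmax r 0) (Rmax_r r 0)). pose proof (Rmax_l r 0). lra.
Qed.

Lemma nfloor_mult_unbounded x : 0 < x ->
  forall K, exists N, forall n, (N <= n)%nat -> (K <= nfloor (INR n * x))%nat.
Proof.
  intros Hx K. destruct (INR_eventually_ge ((INR K + 1) / x)) as [N HN].
  exists N. intros n Hn. specialize (HN n Hn). apply div_le_iff in HN; [|exact Hx].
  pose proof (nfloor_spec (INR n * x) ltac:(pose proof (pos_INR n); nra)).
  apply Nat.lt_le_incl, INR_lt. lra.
Qed.

Lemma exists_gt_mul_lt x h t : 0 <= x -> x * h < t -> exists l, h < l /\ x * l < t.
Proof.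
  intros Hx Ht. exists (h + (t - x * h) / (2 * (x + 1))).
  assert (He : 0 < (t - x * h) / (2 * (x + 1))) by (apply Rdiv_lt_0_compat; lra).
  split; [lra|].
  assert ((t - x * h) / (2 * (x + 1)) * (2 * (x + 1)) = t - x * h) by (field; lra). nra.
Qed.

(* The witness is [g m = ⌊m / R'⌋ + 1]. *)
Lemma ceil_div_index x R' : 0 <= x < R' -> exists g : nat -> nat,
  (forall m, INR m < INR (g m) * R') /\
  (exists N, forall m, (N <= m)%nat -> INR (g m) * x <= INR m) /\
  (forall K, exists N, forall m, (N <= m)%nat -> (K <= g m)%nat).
Proof.
  intros Hx. exists (fun m => S (nfloor (INR m / R'))).
  assert (Hg : forall m, INR m < INR (S (nfloor (INR m / R'))) * R'
                         /\ INR (S (nfloor (INR m / R'))) <= INR m / R' + 1).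
  { intros m. rewrite S_INR.
    assert (0 <= INR m / R') by (apply le_div_iff; [lra|]; pose proof (pos_INR m); lra).
    pose proof (nfloor_spec _ H) as [H1 H2]. split; [|lra].
    replace (INR m) with (INR m / R' * R') at 1 by (field; lra). apply Rmult_lt_compat_r; lra. }
  split; [intros m; apply Hg|split].
  - destruct (INR_eventually_ge (x * R' / (R' - x))) as [N HN]. exists N. intros m Hm.
    specialize (HN m Hm). apply div_le_iff in HN; [|lra]. destruct (Hg m) as [_ H2].
    apply Rle_trans with ((INR m / R' + 1) * x); [apply Rmult_le_compat_r; lra|].
    replace ((INR m / R' + 1) * x) with (INR m - (INR m * (R' - x) - x * R') / R') by (field; lra).
    assert (0 <= (INR m * (R' - x) - x * R') / R') by (apply le_div_iff; lra). lra.
  - intros K. destruct (INR_eventually_ge (INR K * R')) as [N HN]. exists N. intros m Hm.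
    specialize (HN m Hm). destruct (Hg m) as [H1 _]. apply Nat.lt_le_incl, INR_lt.
    apply (Rmult_lt_reg_r R'); lra.
Qed.

(** * Stopping times *)

Fixpoint first_some (l : list (option (list nat))) : option (list nat) :=
  match l with
  | [] => None
  | Some y :: _ => Some y
  | None :: t => first_some t
  end.

(* The output of [phi] once the coin prefix [s] has been read: the output at
   the first leaf among the prefixes of [s], or [None] if [T > length s]. *)
Definition first_output (phi : algo) (s : list nat) : option (list nat) :=
  first_some (map (fun j => phi (firstn j s)) (seq 0 (S (length s)))).

Lemma first_some_app l1 l2 :
  first_some (l1 ++ l2) = match first_some l1 with Some y => Some y | None => first_some l2 end.
Proof. induction l1 as [|[a|] l1 IH]; simpl; auto. Qed.

Lemma forallb_is_none_first_some (g : nat -> option (list nat)) l :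
  forallb (fun j => is_noneb (g j)) l = is_noneb (first_some (map g l)).
Proof. induction l as [|a l IH]; simpl; auto. destruct (g a); simpl; auto. Qed.

Lemma map_prefixes_snoc (phi : algo) s x :
  map (fun j => phi (firstn j (s ++ [x]))) (seq 0 (S (length s))) =
  map (fun j => phi (firstn j s)) (seq 0 (S (length s))).
Proof.
  apply map_ext_in. intros j Hj. apply in_seq in Hj.
  rewrite firstn_app. replace (j - length s)%nat with 0%nat by lia. rewrite app_nil_r. reflexivity.
Qed.

Lemma seq_prefixes_snoc (s : list nat) x :
  seq 0 (S (length (s ++ [x]))) = seq 0 (S (length s)) ++ [S (length s)].
Proof. rewrite length_app, Nat.add_1_r. apply seq_S. Qed.

Lemma first_output_nil phi : first_output phi [] = phi [].
Proof. unfold first_output. simpl. destruct (phi []); reflexivity. Qed.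

Lemma first_output_snoc phi s x : first_output phi (s ++ [x]) =
  match first_output phi s with Some y => Some y | None => phi (s ++ [x]) end.
Proof.
  unfold first_output. rewrite seq_prefixes_snoc, map_app, first_some_app, map_prefixes_snoc.
  cbn [map]. rewrite firstn_all2 by (rewrite length_app; simpl; lia). cbn [first_some].
  destruct (first_some _); [reflexivity|]. destruct (phi (s ++ [x])); reflexivity.
Qed.

Lemma leafb_nil phi : leafb phi [] = negb (is_noneb (phi [])).
Proof. apply andb_true_r. Qed.

Lemma leafb_snoc phi s x :
  leafb phi (s ++ [x]) = negb (is_noneb (phi (s ++ [x]))) && is_noneb (first_output phi s).
Proof.
  unfold leafb. f_equal. rewrite length_app, Nat.add_1_r.
  rewrite (forallb_is_none_first_some (fun j => phi (firstn j (s ++ [x])))), map_prefixes_snoc.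
  reflexivity.
Qed.

Lemma first_output_Some phi s y : first_output phi s = Some y -> exists t, phi t = Some y.
Proof.
  unfold first_output. generalize (seq 0 (S (length s))).
  induction l as [|j l IH]; simpl; [discriminate|].
  destruct (phi (firstn j s)) eqn:E; [intros [= <-]; eauto|exact IH].
Qed.

Lemma first_output_None phi s : first_output phi s = None -> phi s = None.
Proof.
  unfold first_output. intros H. rewrite <- (firstn_all s).
  assert (Hs : In (length s) (seq 0 (S (length s)))) by (apply in_seq; lia).
  revert H Hs. generalize (seq 0 (S (length s))).
  induction l as [|j l IH]; simpl; [contradiction|].
  destruct (phi (firstn j s)) eqn:E; [discriminate|].
  intros H [<-|Hin]; auto.
Qed.

Definition eqb_word (y y' : list nat) : bool := if list_eq_dec Nat.eq_dec y y' then true else false.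

Lemma eqb_word_refl y : eqb_word y y = true.
Proof. unfold eqb_word. destruct (list_eq_dec _ y y); congruence. Qed.

(* [Pr_running m] is Pr(T > m); [Pr_stopped_in m B] is Pr(T <= m and the output is in B). *)
Definition Pr_running (Mx : nat) (PX : list nat -> R) (phi : algo) (m : nat) : R :=
  lsum (fun s => if is_noneb (first_output phi s) then PX s else 0) (words Mx m).

Definition Pr_stopped_in (Mx : nat) (PX : list nat -> R) (phi : algo) (m : nat)
    (B : list nat -> bool) : R :=
  lsum (fun s => match first_output phi s with Some y => if B y then PX s else 0 | None => 0 end)
       (words Mx m).

Lemma PrT_gt_running Mx PX phi x : PrT_gt Mx PX phi x = Pr_running Mx PX phi (nfloor x).
Proof.
  apply lsum_ext. intros s _. rewrite forallb_is_none_first_some. reflexivity.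
Qed.

Section Stopping.
Context {Mx : nat} {PX : list nat -> R} (hX : is_process Mx PX) (phi : algo).

Lemma Pr_running_ge0 m : 0 <= Pr_running Mx PX phi m.
Proof. apply lsum_ge0. intros s _. destruct (is_noneb _); [apply (process_ge0 hX)|lra]. Qed.

Lemma Pr_running_S m : Pr_running Mx PX phi (S m) <= Pr_running Mx PX phi m.
Proof.
  unfold Pr_running. rewrite lsum_words_S. apply lsum_le. intros s _.
  destruct (first_output phi s) eqn:E; simpl.
  - right. apply lsum_eq0. intros x _. rewrite first_output_snoc, E. reflexivity.
  - rewrite <- (process_children hX s). apply lsum_le. intros x _.
    destruct (is_noneb _); [lra|apply (process_ge0 hX)].
Qed.

Lemma Pr_running_mono m m' : (m <= m')%nat -> Pr_running Mx PX phi m' <= Pr_running Mx PX phi m.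
Proof. induction 1; [lra|]. pose proof (Pr_running_S m0). lra. Qed.

Lemma Pr_running_stopped_total m (B : list nat -> bool) :
  Pr_running Mx PX phi m + Pr_stopped_in Mx PX phi m B
  + Pr_stopped_in Mx PX phi m (fun y => negb (B y)) = 1.
Proof.
  rewrite <- (process_total hX m). unfold Pr_running, Pr_stopped_in. rewrite <- !lsum_add.
  apply lsum_ext. intros s _. destruct (first_output phi s); simpl; [destruct (B l)|]; simpl; lra.
Qed.

(* Leaves are exactly the prefixes where [first_output] switches from [None]
   to [Some], so the stopped mass up to [m] is a partial sum of leaf masses. *)
Lemma Pr_stopped_at_partial_sum y m :
  Pr_stopped_in Mx PX phi m (eqb_word y) =
  sum_f_R0 (fun i => lsum (fun s => if leafb phi s && outputs phi s y then PX s else 0)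
                          (words Mx i)) m.
Proof.
  induction m as [|m IH].
  - unfold Pr_stopped_in. simpl. rewrite first_output_nil, leafb_nil. unfold outputs.
    destruct (phi []) as [y'|]; simpl; [|reflexivity].
    unfold eqb_word. destruct (list_eq_dec _ y y'), (list_eq_dec _ y' y); congruence.
  - cbn [sum_f_R0]. rewrite <- IH. unfold Pr_stopped_in. rewrite !lsum_words_S, <- lsum_add.
    apply lsum_ext. intros s _. destruct (first_output phi s) as [y'|] eqn:E.
    + assert (Hleaf : lsum (fun x => if leafb phi (s ++ [x]) && outputs phi (s ++ [x]) y
                                     then PX (s ++ [x]) else 0) (seq 0 Mx) = 0).
      { apply lsum_eq0. intros x _. rewrite leafb_snoc, E, andb_false_r. reflexivity. }
      rewrite Hleaf, Rplus_0_r, (lsum_ext _ (fun x => if eqb_word y y' then PX (s ++ [x]) else 0))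
        by (intros x _; rewrite first_output_snoc, E; reflexivity).
      rewrite lsum_if, (process_children hX). reflexivity.
    + rewrite Rplus_0_l. apply lsum_ext. intros x _.
      rewrite first_output_snoc, E, leafb_snoc, E. unfold outputs.
      destruct (phi (s ++ [x])) as [y''|]; simpl; [|reflexivity].
      unfold eqb_word. destruct (list_eq_dec _ y y''), (list_eq_dec _ y'' y); congruence.
Qed.

Section Valid.
Context {My : nat} {PY : list nat -> R} {n : nat} (hv : valid_algo Mx My PX PY n phi).

Lemma Pr_stopped_at_le y m : In y (words My n) -> Pr_stopped_in Mx PX phi m (eqb_word y) <= PY y.
Proof.
  intros Hy. rewrite Pr_stopped_at_partial_sum. apply sum_incr; [exact (proj2 hv y Hy)|].
  intros i. apply lsum_ge0. intros s _. destruct (_ && _); [apply (process_ge0 hX)|lra].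
Qed.

Lemma first_output_valid s y : first_output phi s = Some y -> In y (words My n).
Proof. intros E. destruct (first_output_Some _ _ _ E) as [t Ht]. exact (proj1 hv t y Ht). Qed.

(* Reading [s] commits the algorithm to [y], so P_X(s) <= P_Y(y). *)
Lemma prefix_prob_le_output_prob m s y :
  In s (words Mx m) -> first_output phi s = Some y -> PX s <= PY y.
Proof.
  intros Hs E. eapply Rle_trans; [|apply (Pr_stopped_at_le y m (first_output_valid s y E))].
  unfold Pr_stopped_in.
  eapply Rle_trans; [|apply (lsum_ge_term _ _ s Hs)].
  - cbv beta. rewrite E. rewrite eqb_word_refl. lra.
  - intros t _. destruct (first_output phi t); [destruct (eqb_word _ _)|];
      [apply (process_ge0 hX)|lra|lra].
Qed.

Lemma Pr_stopped_in_le m (B : list nat -> bool) :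
  Pr_stopped_in Mx PX phi m B <= lsum (fun y => if B y then PY y else 0) (words My n).
Proof.
  apply Rle_trans with
    (lsum (fun y => if B y then Pr_stopped_in Mx PX phi m (eqb_word y) else 0) (words My n)).
  - unfold Pr_stopped_in. rewrite (lsum_ext (fun y => if B y then _ else 0)
      (fun y => lsum (fun s => if B y then match first_output phi s with
         Some y' => if eqb_word y y' then PX s else 0 | None => 0 end else 0) (words Mx m)))
      by (intros y _; symmetry; apply lsum_if).
    rewrite lsum_comm. apply lsum_le. intros s _.
    destruct (first_output phi s) as [y0|] eqn:E;
      [|right; symmetry; apply lsum_eq0; intros y _; destruct (B y); reflexivity].
    destruct (B y0) eqn:EB; [|apply lsum_ge0; intros y _;
      destruct (B y), (eqb_word y y0); try apply (process_ge0 hX); lra].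
    eapply Rle_trans; [|apply (lsum_ge_term _ _ y0 (first_output_valid s y0 E))].
    + cbv beta. rewrite EB, eqb_word_refl. lra.
    + intros y _. destruct (B y), (eqb_word y y0); try apply (process_ge0 hX); lra.
  - apply lsum_le. intros y Hy. destruct (B y); [apply Pr_stopped_at_le; exact Hy|lra].
Qed.

End Valid.
End Stopping.

(** * Intervals *)

Definition overlap (a b c d : R) : R := Rmax 0 (Rmin b d - Rmax a c).

Ltac unfold_overlap := unfold overlap, Rmax, Rmin in *; repeat destruct Rle_dec; lra.

Lemma overlap_ge0 a b c d : 0 <= overlap a b c d.
Proof. unfold_overlap. Qed.

Lemma overlap_comm a b c d : overlap a b c d = overlap c d a b.
Proof. unfold_overlap. Qed.

Lemma overlap_split a b e c d : a <= b -> b <= e -> overlap a b c d + overlap b e c d = overlap a e c d.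
Proof. intros; unfold_overlap. Qed.

Lemma overlap_le_l a b c d : a <= b -> overlap a b c d <= b - a.
Proof. intros; unfold_overlap. Qed.

Lemma overlap_le_r a b c d : c <= d -> overlap a b c d <= d - c.
Proof. intros; unfold_overlap. Qed.

Lemma overlap_unit a b : 0 <= a -> a <= b -> b <= 1 -> overlap a b 0 1 = b - a.
Proof. intros; unfold_overlap. Qed.

Lemma overlap_not_sub a b c d del : a <= b -> c <= d -> b - a < del ->
  ~ (forall t, a <= t < b -> c <= t < d) ->
  overlap a b c d <= overlap a b (c - del) (c + del) + overlap a b (d - del) (d + del).
Proof.
  intros Hab Hcd Hdel Hsub. pose proof (overlap_ge0 a b (c - del) (c + del)).
  pose proof (overlap_ge0 a b (d - del) (d + del)).
  destruct (Rlt_or_le a c) as [Hac|Hca].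
  { assert (overlap a b c d <= overlap a b (c - del) (c + del)) by unfold_overlap. lra. }
  destruct (Rlt_or_le d b) as [Hdb|Hbd].
  { assert (overlap a b c d <= overlap a b (d - del) (d + del)) by unfold_overlap. lra. }
  exfalso. apply Hsub. intros; lra.
Qed.

Lemma overlap_telescope (f : nat -> R) c d : (forall x, f x <= f (S x)) -> forall k,
  lsum (fun x => overlap (f x) (f (S x)) c d) (seq 0 k) = overlap (f 0%nat) (f k) c d.
Proof.
  intros Hf. assert (Hmono : forall a b, (a <= b)%nat -> f a <= f b).
  { induction 1; [lra|]. pose proof (Hf m). lra. }
  induction k as [|k IH]; [simpl; unfold_overlap|].
  rewrite seq_S, lsum_app, IH. simpl. rewrite Rplus_0_r. apply overlap_split; auto. apply Hmono; lia.
Qed.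

Lemma ivl_aux_app P pre s t lo hi : ivl_aux P pre (s ++ t) lo hi =
  let '(lo', hi') := ivl_aux P pre s lo hi in ivl_aux P (pre ++ s) t lo' hi'.
Proof.
  revert pre lo hi. induction s as [|x s IH]; intros pre lo hi; simpl.
  - rewrite app_nil_r. reflexivity.
  - rewrite IH. destruct (ivl_aux P (pre ++ [x]) s _ _). rewrite <- app_assoc. reflexivity.
Qed.

(** [cdf P s k] = P(X_{|s|+1} < k | X^{|s|} = s); it is [0] when [P s = 0]. *)
Definition cdf (P : list nat -> R) (s : list nat) (k : nat) : R :=
  lsum (fun j => P (s ++ [j]) / P s) (seq 0 k).

Lemma cdf_S P s k : cdf P s (S k) = cdf P s k + P (s ++ [k]) / P s.
Proof. unfold cdf. rewrite seq_S, lsum_app. simpl. lra. Qed.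

Lemma ivl_snoc P s x : ivl P (s ++ [x]) =
  (fst (ivl P s) + (snd (ivl P s) - fst (ivl P s)) * cdf P s x,
   fst (ivl P s) + (snd (ivl P s) - fst (ivl P s)) * cdf P s (S x)).
Proof. unfold ivl. rewrite ivl_aux_app. destruct (ivl_aux P [] s 0 1). reflexivity. Qed.

Section IntervalTree.
Context {M : nat} {P : list nat -> R} (hP : is_process M P).

Lemma cdf_le_S s k : cdf P s k <= cdf P s (S k).
Proof.
  rewrite cdf_S. pose proof (process_ge0 hP s). pose proof (process_ge0 hP (s ++ [k])).
  destruct (Req_dec (P s) 0) as [->|Hs]; [unfold Rdiv; rewrite Rinv_0; lra|].
  assert (0 <= P (s ++ [k]) / P s)
    by (unfold Rdiv; apply Rmult_le_pos; [lra|left; apply Rinv_0_lt_compat; lra]). lra.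
Qed.

Lemma cdf_le k k' s : (k <= k')%nat -> cdf P s k <= cdf P s k'.
Proof. induction 1; [lra|]. pose proof (cdf_le_S s m). lra. Qed.

Lemma cdf_total s : 0 < P s -> cdf P s M = 1.
Proof. intros Hs. unfold cdf, Rdiv. rewrite lsum_mulr, (process_children hP). field. lra. Qed.

Lemma ivl_bounds m s : In s (words M m) ->
  0 <= fst (ivl P s) /\ fst (ivl P s) <= snd (ivl P s) /\ snd (ivl P s) <= 1 /\
  snd (ivl P s) - fst (ivl P s) = P s.
Proof.
  revert s. induction m as [|m IH]; intros s Hs.
  - destruct Hs as [<-|[]]. unfold ivl. simpl. rewrite (proj1 hP). lra.
  - apply words_S_inv in Hs as [s' [x [-> [Hs Hx]]]]. specialize (IH s' Hs).
    rewrite ivl_snoc. simpl.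
    set (a := fst (ivl P s')) in *. set (b := snd (ivl P s')) in *.
    destruct IH as [H0a [Hab [Hb1 Hlen]]]. rewrite Hlen.
    pose proof (process_ge0 hP (s' ++ [x])).
    destruct (Req_dec (P s') 0) as [Hz|Hpos].
    + pose proof (process_child_le hP s' x Hx). assert (P (s' ++ [x]) = 0) by lra.
      rewrite Hz. lra.
    + assert (Hpos' : 0 < P s') by (pose proof (process_ge0 hP s'); lra).
      pose proof (cdf_le 0 x s' ltac:(lia)) as H0. unfold cdf at 1 in H0. simpl in H0.
      pose proof (cdf_le (S x) M s' Hx) as H1. rewrite (cdf_total s' Hpos') in H1.
      rewrite cdf_S in *. rewrite Rmult_plus_distr_l.
      replace (P s' * (P (s' ++ [x]) / P s')) with (P (s' ++ [x])) by (field; lra).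
      assert (0 <= P s' * cdf P s' x) by (apply Rmult_le_pos; lra).
      assert (P s' * cdf P s' x + P (s' ++ [x]) <= P s').
      { replace (P (s' ++ [x])) with (P s' * (P (s' ++ [x]) / P s')) by (field; lra).
        rewrite <- Rmult_plus_distr_l.
        pose proof (Rmult_le_compat_l (P s') _ _ (Rlt_le _ _ Hpos') H1). lra. }
      repeat split; lra.
Qed.

Lemma ivl_partition m c d :
  lsum (fun s => overlap (fst (ivl P s)) (snd (ivl P s)) c d) (words M m) = overlap 0 1 c d.
Proof.
  induction m as [|m IH]; [simpl; unfold ivl; simpl; lra|].
  rewrite lsum_words_S, <- IH. apply lsum_ext. intros s Hs.
  destruct (ivl_bounds m s Hs) as [H0a [Hab [Hb1 Hlen]]].
  set (a := fst (ivl P s)) in *. set (b := snd (ivl P s)) in *.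
  rewrite (lsum_ext _ (fun x => overlap (a + (b - a) * cdf P s x) (a + (b - a) * cdf P s (S x)) c d))
    by (intros x _; rewrite ivl_snoc; reflexivity).
  rewrite (overlap_telescope (fun k => a + (b - a) * cdf P s k))
    by (intros x; pose proof (cdf_le_S s x); apply Rplus_le_compat_l, Rmult_le_compat_l; lra).
  unfold cdf at 1. simpl. rewrite Rmult_0_r, Rplus_0_r. f_equal.
  rewrite Hlen. destruct (Req_dec (P s) 0) as [Hz|Hpos]; [rewrite Hz; lra|].
  rewrite cdf_total by (pose proof (process_ge0 hP s); lra). lra.
Qed.

Lemma lsum_overlap_ivl m c d : 0 <= c -> c <= d -> d <= 1 ->
  lsum (fun s => overlap (fst (ivl P s)) (snd (ivl P s)) c d) (words M m) = d - c.
Proof. intros. rewrite ivl_partition, overlap_comm, overlap_unit; auto. Qed.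

End IntervalTree.

Lemma interval_alg_None_not_sub My n PX PY s : interval_alg My n PX PY s = None ->
  forall y, In y (words My n) ->
  ~ (forall t, fst (ivl PX s) <= t < snd (ivl PX s) -> fst (ivl PY y) <= t < snd (ivl PY y)).
Proof.
  unfold interval_alg. destruct (ivl PX s) as [a b]. intros H y Hy.
  pose proof (find_none _ _ H y Hy) as Hsub. cbv beta in Hsub. simpl.
  destruct (ivl PY y) as [c d]. unfold subintb in Hsub.
  destruct (excluded_middle_informative _); [discriminate|assumption].
Qed.

(** * Information spectra *)

Lemma self_info_eq n p : 0 < p -> / INR n * log2 (/ p) = - log2 p / INR n.
Proof. intros Hp. unfold log2, Rdiv. rewrite ln_Rinv by exact Hp. ring. Qed.

Lemma self_info_ge_iff n p lam : (0 < n)%nat -> 0 < p ->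
  lam <= / INR n * log2 (/ p) <-> p <= Rpower 2 (- (INR n * lam)).
Proof.
  intros Hn Hp. pose proof (lt_0_INR n Hn).
  rewrite self_info_eq, le_div_iff, <- log2_le_iff by assumption. lra.
Qed.

Lemma self_info_le_iff n p lam : (0 < n)%nat -> 0 < p ->
  / INR n * log2 (/ p) <= lam <-> Rpower 2 (- (INR n * lam)) <= p.
Proof.
  intros Hn Hp. pose proof (lt_0_INR n Hn).
  rewrite self_info_eq, div_le_iff, <- log2_ge_iff by assumption. lra.
Qed.

Definition spec_ge (P : list nat -> R) (n : nat) (lam : R) (s : list nat) : bool :=
  if Rlt_dec 0 (P s) then if Rle_dec lam (/ INR n * log2 (/ P s)) then true else false else false.
Definition spec_le (P : list nat -> R) (n : nat) (lam : R) (s : list nat) : bool :=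
  if Rlt_dec 0 (P s) then if Rle_dec (/ INR n * log2 (/ P s)) lam then true else false else false.

Lemma PrGe_spec M P n lam :
  PrGe M P n lam = lsum (fun s => if spec_ge P n lam s then P s else 0) (words M n).
Proof. apply lsum_ext. intros s _. unfold spec_ge. destruct Rlt_dec; [destruct Rle_dec|]; reflexivity. Qed.

Lemma PrLe_spec M P n lam :
  PrLe M P n lam = lsum (fun s => if spec_le P n lam s then P s else 0) (words M n).
Proof. apply lsum_ext. intros s _. unfold spec_le. destruct Rlt_dec; [destruct Rle_dec|]; reflexivity. Qed.

Lemma spec_geP P n lam s : (0 < n)%nat ->
  spec_ge P n lam s = true <-> 0 < P s /\ P s <= Rpower 2 (- (INR n * lam)).
Proof.
  intros Hn. unfold spec_ge. destruct (Rlt_dec 0 (P s)) as [Hp|Hp]; [|split; [discriminate|tauto]].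
  rewrite <- (self_info_ge_iff n (P s) lam Hn Hp). destruct Rle_dec; split; tauto || discriminate.
Qed.

Lemma spec_leP P n lam s : (0 < n)%nat ->
  spec_le P n lam s = true <-> 0 < P s /\ Rpower 2 (- (INR n * lam)) <= P s.
Proof.
  intros Hn. unfold spec_le. destruct (Rlt_dec 0 (P s)) as [Hp|Hp]; [|split; [discriminate|tauto]].
  rewrite <- (self_info_le_iff n (P s) lam Hn Hp). destruct Rle_dec; split; tauto || discriminate.
Qed.

Lemma spec_ge_false P n lam s : (0 < n)%nat -> 0 < P s ->
  spec_ge P n lam s = false -> Rpower 2 (- (INR n * lam)) < P s.
Proof.
  intros Hn Hp H. apply Rnot_le_lt. intros Hle.
  assert (spec_ge P n lam s = true) by (apply spec_geP; auto). congruence.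
Qed.

Lemma spec_le_false P n lam s : (0 < n)%nat -> 0 < P s ->
  spec_le P n lam s = false -> P s < Rpower 2 (- (INR n * lam)).
Proof.
  intros Hn Hp H. apply Rnot_le_lt. intros Hle.
  assert (spec_le P n lam s = true) by (apply spec_leP; auto). congruence.
Qed.

Section SpectralEntropy.
Context {M : nat} {P : list nat -> R} (hP : is_process M P).

Lemma PrGe_ge0 n lam : 0 <= PrGe M P n lam.
Proof. apply lsum_ge0. intros s _. destruct Rlt_dec; [destruct Rle_dec|]; lra. Qed.

Lemma PrLe_ge0 n lam : 0 <= PrLe M P n lam.
Proof. apply lsum_ge0. intros s _. destruct Rlt_dec; [destruct Rle_dec|]; lra. Qed.

Lemma PrGe_antimono n l1 l2 : l1 <= l2 -> PrGe M P n l2 <= PrGe M P n l1.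
Proof. intros Hl. apply lsum_le. intros s _. repeat destruct Rlt_dec; repeat destruct Rle_dec; lra. Qed.

Lemma PrLe_mono n l1 l2 : l1 <= l2 -> PrLe M P n l1 <= PrLe M P n l2.
Proof. intros Hl. apply lsum_le. intros s _. repeat destruct Rlt_dec; repeat destruct Rle_dec; lra. Qed.

Lemma PrGe_cv0_above h lam : is_sup_entropy M P h -> h < lam -> Un_cv (fun n => PrGe M P n lam) 0.
Proof.
  intros [_ Hglb] Hl.
  destruct (classic (exists x, Un_cv (fun n => PrGe M P n x) 0 /\ x <= lam)) as [[x [Hx Hxl]]|Hno].
  - apply (Un_cv0_le _ _ (ex_intro _ 0%nat (fun n _ =>
      conj (PrGe_ge0 n lam) (PrGe_antimono n x lam Hxl))) Hx).
  - exfalso. assert (lam <= h); [|lra]. apply Hglb. intros x Hx.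
    destruct (Rle_or_lt lam x) as [|Hxl]; [assumption|]. exfalso. apply Hno. exists x. split; [exact Hx|lra].
Qed.

Lemma PrLe_cv0_below h lam : is_inf_entropy M P h -> lam < h -> Un_cv (fun n => PrLe M P n lam) 0.
Proof.
  intros [_ Hlub] Hl.
  destruct (classic (exists x, Un_cv (fun n => PrLe M P n x) 0 /\ lam <= x)) as [[x [Hx Hxl]]|Hno].
  - apply (Un_cv0_le _ _ (ex_intro _ 0%nat (fun n _ =>
      conj (PrLe_ge0 n lam) (PrLe_mono n lam x Hxl))) Hx).
  - exfalso. assert (h <= lam); [|lra]. apply Hlub. intros x Hx.
    destruct (Rle_or_lt x lam) as [|Hxl]; [assumption|]. exfalso. apply Hno. exists x. split; [exact Hx|lra].
Qed.

Lemma PrGe_add_PrLe_ge1 n lam : 1 <= PrGe M P n lam + PrLe M P n lam.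
Proof.
  rewrite <- (process_total hP n). unfold PrGe, PrLe. rewrite <- lsum_add. apply lsum_le. intros s _.
  pose proof (process_ge0 hP s). repeat destruct Rlt_dec; repeat destruct Rle_dec; lra.
Qed.

Lemma PrGe_neg_eq1 n lam : (0 < n)%nat -> lam < 0 -> PrGe M P n lam = 1.
Proof.
  intros Hn Hlam. rewrite <- (process_total hP n), PrGe_spec. apply lsum_ext. intros s Hs.
  destruct (spec_ge P n lam s) eqn:E; [reflexivity|].
  destruct (Req_dec (P s) 0) as [Hz|Hpos]; [lra|]. exfalso.
  pose proof (spec_ge_false P n lam s Hn ltac:(pose proof (process_ge0 hP s); lra) E).
  pose proof (process_le1 hP n s Hs). pose proof (lt_0_INR n Hn).
  assert (1 < Rpower 2 (- (INR n * lam))); [|lra].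
  rewrite <- (Rpower_O 2) by lra. apply Rpower_lt; nra.
Qed.

End SpectralEntropy.

Lemma PrGe_not_cv0_below M P h lam : is_sup_entropy M P h -> lam < h -> ~ Un_cv (fun n => PrGe M P n lam) 0.
Proof. intros [Hlb _] Hl Hc. specialize (Hlb lam Hc). lra. Qed.

Lemma PrLe_not_cv0_above M P h lam : is_inf_entropy M P h -> h < lam -> ~ Un_cv (fun n => PrLe M P n lam) 0.
Proof. intros [Hub _] Hl Hc. specialize (Hub lam Hc). lra. Qed.

Lemma inf_entropy_le_sup_entropy M P hs hi : is_process M P ->
  is_sup_entropy M P hs -> is_inf_entropy M P hi -> hi <= hs.
Proof.
  intros hP Hs Hi. destruct (Rle_or_lt hi hs) as [|Hl]; [assumption|]. exfalso.
  set (lam := (hi + hs) / 2).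
  apply (not_Un_cv0_ge1 (fun n => PrGe M P n lam + PrLe M P n lam)).
  - intros n _. apply (PrGe_add_PrLe_ge1 hP).
  - apply Un_cv0_plus; [apply (PrGe_cv0_above hs)|apply (PrLe_cv0_below hi)]; unfold lam; auto; lra.
Qed.

Lemma sup_entropy_ge0 M P h : is_process M P -> is_sup_entropy M P h -> 0 <= h.
Proof.
  intros hP Hs. destruct (Rle_or_lt 0 h) as [|Hl]; [assumption|]. exfalso.
  apply (not_Un_cv0_ge1 (fun n => PrGe M P n (h / 2))).
  - intros n Hn. rewrite (PrGe_neg_eq1 hP) by (lia || lra). lra.
  - apply (PrGe_cv0_above h); auto; lra.
Qed.

(* Stdlib's [/ INR 0 = 0] makes the normalized self-information vanish at length 0. *)
Lemma PrGe_length0 M P lam : 0 < lam -> PrGe M P 0 lam = 0.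
Proof.
  intros Hlam. unfold PrGe. simpl. rewrite Rinv_0, Rmult_0_l.
  destruct Rlt_dec; [destruct Rle_dec|]; lra.
Qed.

Lemma PrGe_floor_mult_cv0 M P h lam x : is_sup_entropy M P h -> 0 <= h < lam -> 0 <= x ->
  Un_cv (fun n => PrGe M P (nfloor (INR n * x)) lam) 0.
Proof.
  intros Hs Hlam Hx. destruct (Req_dec x 0) as [->|Hx0].
  - intros eps He. exists 0%nat. intros n _. rewrite Rmult_0_r, nfloor_0, PrGe_length0 by lra.
    unfold R_dist. rewrite Rminus_0_r, Rabs_R0. lra.
  - apply (Un_cv_comp (fun m => PrGe M P m lam)); [apply (PrGe_cv0_above h); tauto|].
    apply nfloor_mult_unbounded. lra.
Qed.

(** * The interval algorithm *)

Section IntervalAlgorithmBound.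
Context {Mx My : nat} {PX PY : list nat -> R} (hX : is_process Mx PX) (hY : is_process My PY).
Context (n m : nat) (lX lY : R) (hn : (0 < n)%nat) (hm : (0 < m)%nat).

Let del := Rpower 2 (- (INR m * lX)).
Let E := Rpower 2 (INR n * lY).
Let ov s y := overlap (fst (ivl PX s)) (snd (ivl PX s)) (fst (ivl PY y)) (snd (ivl PY y)).
Let ov_near s c := overlap (fst (ivl PX s)) (snd (ivl PX s)) (c - del) (c + del).

(* A bound on |I_s ∩ J_y| for a coin prefix [s] not yet decided: either y has
   small probability, or s has large probability, or I_s is short and then
   straddles an endpoint of J_y, where the factor [PY y * E > 1] pays for it. *)
Definition cover_term s y : R :=
  (if spec_ge PY n lY y then ov s y else 0) + (if spec_le PX m lX s then ov s y else 0)
  + PY y * E * (ov_near s (fst (ivl PY y)) + ov_near s (snd (ivl PY y))).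

Lemma near_term_ge0 s y : 0 <= PY y * E * (ov_near s (fst (ivl PY y)) + ov_near s (snd (ivl PY y))).
Proof.
  apply Rmult_le_pos; [apply Rmult_le_pos; [apply (process_ge0 hY)|left; apply exp_pos]|].
  unfold ov_near. apply Rplus_le_le_0_compat; apply overlap_ge0.
Qed.

Lemma cover_term_ge0 s y : 0 <= cover_term s y.
Proof.
  unfold cover_term. pose proof (near_term_ge0 s y).
  assert (0 <= ov s y) by apply overlap_ge0.
  destruct (spec_ge PY n lY y), (spec_le PX m lX s); lra.
Qed.

Lemma overlap_le_cover_term s y : In s (words Mx m) -> In y (words My n) ->
  ~ (forall t, fst (ivl PX s) <= t < snd (ivl PX s) -> fst (ivl PY y) <= t < snd (ivl PY y)) ->
  ov s y <= cover_term s y.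
Proof.
  intros Hs Hy Hsub.
  destruct (ivl_bounds hX m s Hs) as [_ [Hab [_ HlenX]]].
  destruct (ivl_bounds hY n y Hy) as [_ [Hcd [_ HlenY]]].
  pose proof (cover_term_ge0 s y). pose proof (process_ge0 hX s). pose proof (process_ge0 hY y).
  destruct (Req_dec (PY y) 0) as [Hy0|Hy0].
  { pose proof (overlap_le_r (fst (ivl PX s)) (snd (ivl PX s)) _ _ Hcd). unfold ov. lra. }
  destruct (Req_dec (PX s) 0) as [Hs0|Hs0].
  { pose proof (overlap_le_l _ _ (fst (ivl PY y)) (snd (ivl PY y)) Hab). unfold ov. lra. }
  unfold cover_term. pose proof (near_term_ge0 s y).
  assert (0 <= ov s y) by apply overlap_ge0.
  destruct (spec_ge PY n lY y) eqn:Eg; [destruct (spec_le PX m lX s); lra|].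
  destruct (spec_le PX m lX s) eqn:El; [lra|].
  apply spec_ge_false in Eg; [|exact hn|lra]. apply spec_le_false in El; [|exact hm|lra].
  assert (HE : 1 < PY y * E).
  { replace 1 with (Rpower 2 (- (INR n * lY)) * E).
    - apply Rmult_lt_compat_r; [apply exp_pos|exact Eg].
    - unfold E. rewrite <- Rpower_plus, Rplus_opp_l. apply Rpower_O. lra. }
  pose proof (overlap_not_sub _ _ _ _ del Hab Hcd ltac:(fold del in El; lra) Hsub) as Hstraddle.
  fold (ov s y) (ov_near s (fst (ivl PY y))) (ov_near s (snd (ivl PY y))) in Hstraddle.
  assert (0 <= ov_near s (fst (ivl PY y)) + ov_near s (snd (ivl PY y)))
    by (unfold ov_near; apply Rplus_le_le_0_compat; apply overlap_ge0).
  nra.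
Qed.

Lemma lsum_overlap_target y : In y (words My n) -> lsum (fun s => ov s y) (words Mx m) = PY y.
Proof.
  intros Hy. destruct (ivl_bounds hY n y Hy) as [H0 [H1 [H2 H3]]].
  unfold ov. rewrite (lsum_overlap_ivl hX); auto.
Qed.

Lemma lsum_overlap_coin s : In s (words Mx m) -> lsum (fun y => ov s y) (words My n) = PX s.
Proof.
  intros Hs. destruct (ivl_bounds hX m s Hs) as [H0 [H1 [H2 H3]]].
  unfold ov. rewrite (lsum_ext _ (fun y => overlap (fst (ivl PY y)) (snd (ivl PY y))
    (fst (ivl PX s)) (snd (ivl PX s)))) by (intros; apply overlap_comm).
  rewrite (lsum_overlap_ivl hY); auto.
Qed.

Lemma lsum_near_endpoints_le :
  lsum (fun s => lsum (fun y => PY y * E * (ov_near s (fst (ivl PY y)) + ov_near s (snd (ivl PY y))))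
    (words My n)) (words Mx m) <= 4 * del * E.
Proof.
  rewrite lsum_comm. assert (0 < del) by apply exp_pos. assert (0 < E) by apply exp_pos.
  apply Rle_trans with (lsum (fun y => PY y * (4 * del * E)) (words My n)).
  - apply lsum_le. intros y _. rewrite lsum_mull, lsum_add. unfold ov_near. rewrite !(ivl_partition hX).
    pose proof (overlap_le_r 0 1 (fst (ivl PY y) - del) (fst (ivl PY y) + del) ltac:(lra)).
    pose proof (overlap_le_r 0 1 (snd (ivl PY y) - del) (snd (ivl PY y) + del) ltac:(lra)).
    pose proof (process_ge0 hY y). assert (0 <= PY y * E) by (apply Rmult_le_pos; lra). nra.
  - rewrite lsum_mulr, (process_total hY). lra.
Qed.

Lemma lsum_cover_term :
  lsum (fun s => lsum (fun y => cover_term s y) (words My n)) (words Mx m)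
  <= PrGe My PY n lY + PrLe Mx PX m lX + 4 * del * E.
Proof.
  unfold cover_term. rewrite (lsum_ext _ (fun s =>
    lsum (fun y => if spec_ge PY n lY y then ov s y else 0) (words My n)
    + lsum (fun y => if spec_le PX m lX s then ov s y else 0) (words My n)
    + lsum (fun y => PY y * E * (ov_near s (fst (ivl PY y)) + ov_near s (snd (ivl PY y)))) (words My n)))
    by (intros s _; rewrite <- !lsum_add; reflexivity).
  rewrite !lsum_add. pose proof lsum_near_endpoints_le.
  rewrite lsum_comm, PrGe_spec, (lsum_ext _ (fun y => if spec_ge PY n lY y then PY y else 0))
    by (intros y Hy; rewrite lsum_if, lsum_overlap_target by exact Hy; reflexivity).
  rewrite PrLe_spec, (lsum_ext (fun s => lsum _ _) (fun s => if spec_le PX m lX s then PX s else 0))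
    by (intros s Hs; rewrite lsum_if, lsum_overlap_coin by exact Hs; reflexivity).
  lra.
Qed.

Lemma Pr_running_interval_le :
  Pr_running Mx PX (interval_alg My n PX PY) m <= PrGe My PY n lY + PrLe Mx PX m lX + 4 * del * E.
Proof.
  eapply Rle_trans; [|apply lsum_cover_term]. apply lsum_le. intros s Hs.
  destruct (first_output (interval_alg My n PX PY) s) eqn:Ef; simpl.
  - apply lsum_ge0. intros; apply cover_term_ge0.
  - apply first_output_None in Ef. rewrite <- (lsum_overlap_coin s Hs).
    apply lsum_le. intros y Hy. apply overlap_le_cover_term; auto.
    exact (interval_alg_None_not_sub My n PX PY s Ef y Hy).
Qed.

End IntervalAlgorithmBound.

(** * Converse bounds *)

Section ConverseBounds.
Context {Mx My : nat} {PX PY : list nat -> R} (hX : is_process Mx PX) (hY : is_process My PY).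
Context {n : nat} {phi : algo} (hv : valid_algo Mx My PX PY n phi) (hn : (0 < n)%nat).

(* Outputs of probability at most 2^(-n lY) can only be produced from coin
   prefixes of probability at most 2^(-n lY) < 2^(-m lX). *)
Lemma Pr_stopped_spec_ge_le m lX lY : INR m * lX < INR n * lY ->
  Pr_stopped_in Mx PX phi m (spec_ge PY n lY) <= PrGe Mx PX m lX.
Proof.
  intros Hlt. unfold Pr_stopped_in. rewrite PrGe_spec. apply lsum_le. intros s Hs.
  pose proof (process_ge0 hX s) as HPs.
  assert (Hsmall : forall y, first_output phi s = Some y -> spec_ge PY n lY y = true ->
                   PX s < Rpower 2 (- (INR m * lX))).
  { intros y E G. apply (spec_geP PY n lY y hn) in G as [_ G].
    pose proof (prefix_prob_le_output_prob hX phi hv m s y Hs E).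
    pose proof (Rpower2_neg_lt n m lX lY Hlt). lra. }
  destruct (first_output phi s) as [y|] eqn:E; [|destruct (spec_ge PX m lX s); lra].
  destruct (spec_ge PY n lY y) eqn:G; [|destruct (spec_ge PX m lX s); lra].
  specialize (Hsmall y eq_refl G).
  destruct m as [|m].
  - destruct Hs as [<-|[]]. rewrite (proj1 hX), INR_0, Rmult_0_l, Ropp_0, Rpower_O in Hsmall; lra.
  - destruct (Req_dec (PX s) 0) as [Hz|Hpos]; [destruct (spec_ge PX (S m) lX s); lra|].
    replace (spec_ge PX (S m) lX s) with true; [lra|].
    symmetry. apply spec_geP; [lia|]. split; lra.
Qed.

Lemma PrGe_target_le m lX lY : INR m * lX < INR n * lY ->
  PrGe My PY n lY <= Pr_running Mx PX phi m + PrGe Mx PX m lX.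
Proof.
  intros Hlt.
  pose proof (Pr_running_stopped_total hX phi m (spec_ge PY n lY)) as Htotal.
  pose proof (Pr_stopped_in_le hX phi hv m (fun y => negb (spec_ge PY n lY y))) as Hrest.
  pose proof (process_mass_split hY n (spec_ge PY n lY)) as HtotalY. rewrite <- PrGe_spec in HtotalY.
  pose proof (Pr_stopped_spec_ge_le m lX lY Hlt). lra.
Qed.

Lemma PrLe_coin_le m lX lY : (0 < m)%nat -> INR m * lX < INR n * lY ->
  PrLe Mx PX m lX <= Pr_running Mx PX phi m + PrLe My PY n lY.
Proof.
  intros Hm Hlt.
  eapply Rle_trans; [|apply Rplus_le_compat_l; rewrite PrLe_spec; apply (Pr_stopped_in_le hX phi hv m)].
  unfold Pr_running, Pr_stopped_in. rewrite PrLe_spec, <- lsum_add. apply lsum_le. intros s Hs.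
  pose proof (process_ge0 hX s).
  destruct (spec_le PX m lX s) eqn:G; [|destruct (first_output phi s) as [y|]; simpl;
    [destruct (spec_le PY n lY y)|]; lra].
  destruct (first_output phi s) as [y|] eqn:E; simpl; [|lra].
  apply (spec_leP PX m lX s Hm) in G as [_ G].
  pose proof (prefix_prob_le_output_prob hX phi hv m s y Hs E).
  pose proof (Rpower2_neg_lt n m lX lY Hlt).
  replace (spec_le PY n lY y) with true; [lra|].
  symmetry. apply spec_leP; [exact hn|]. split; [|lra].
  apply Rlt_le_trans with (Rpower 2 (- (INR n * lY))); [apply exp_pos|lra].
Qed.

End ConverseBounds.

(** * Rates *)

Section Rates.
Context {Mx My : nat} {PX PY : list nat -> R} (hX : is_process Mx PX) (hY : is_process My PY).
Context {HXsup HXinf HYsup HYinf : R}.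

Lemma interval_rate_achievable (eXinf : is_inf_entropy Mx PX HXinf) (eYsup : is_sup_entropy My PY HYsup)
  Rt : 0 < Rt -> HYsup < Rt * HXinf -> int_rates Mx My PX PY Rt.
Proof.
  intros HRt Hlt. pose proof (sup_entropy_ge0 My PY HYsup hY eYsup).
  set (lX := (HYsup / Rt + HXinf) / 2). set (lY := (HYsup + Rt * lX) / 2).
  assert (HRlX : Rt * lX = (HYsup + Rt * HXinf) / 2) by (unfold lX; field; lra).
  assert (HlX : 0 < lX < HXinf).
  { assert (HYsup / Rt < HXinf) by (apply div_lt_iff; lra).
    assert (0 <= HYsup / Rt) by (apply le_div_iff; lra). unfold lX; lra. }
  set (mm := fun n => nfloor (INR n * Rt)).
  split; [lra|].
  apply Un_cv0_le with (fun n => PrGe My PY n lY + PrLe Mx PX (mm n) lX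
                                 + 4 * Rpower 2 ((lY - Rt * lX) * INR n + lX)).
  - destruct (nfloor_mult_unbounded Rt HRt 1) as [N HN]. exists (Nat.max N 1). intros n Hn.
    rewrite PrT_gt_running. fold (mm n). split; [apply (Pr_running_ge0 hX)|].
    eapply Rle_trans; [apply (Pr_running_interval_le hX hY n (mm n) lX lY); [lia|apply HN; lia]|].
    apply Rplus_le_compat_l. rewrite Rmult_assoc. apply Rmult_le_compat_l; [lra|].
    rewrite <- Rpower_plus. apply Rpower2_le_iff.
    pose proof (nfloor_spec (INR n * Rt) ltac:(pose proof (pos_INR n); nra)). fold (mm n) in H0. nra.
  - repeat apply Un_cv0_plus.
    + apply (PrGe_cv0_above HYsup); [exact eYsup|unfold lY; lra].
    + apply (Un_cv_comp (fun m => PrLe Mx PX m lX)); [apply (PrLe_cv0_below HXinf); tauto|].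
      apply nfloor_mult_unbounded, HRt.
    + apply Rpower2_affine_cv0. unfold lY. lra.
Qed.

Lemma opt_rate_ge_sup_ratio (eXsup : is_sup_entropy Mx PX HXsup) (eXinf : is_inf_entropy Mx PX HXinf)
  (eYsup : is_sup_entropy My PY HYsup) (hpos : 0 < HXinf) x :
  opt_rates Mx My PX PY x -> HYsup / HXsup <= x.
Proof.
  intros [phi [Hv [Hx Hcv]]].
  pose proof (inf_entropy_le_sup_entropy Mx PX HXsup HXinf hX eXsup eXinf).
  apply div_le_iff; [lra|]. apply Rnot_lt_le. intros Hlt.
  destruct (exists_gt_mul_lt x HXsup HYsup Hx ltac:(lra)) as [lX [HlX HxlX]].
  set (lY := (x * lX + HYsup) / 2).
  apply (PrGe_not_cv0_below My PY HYsup lY eYsup ltac:(unfold lY; lra)).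
  apply Un_cv0_le with (fun n => PrT_gt Mx PX (phi n) (INR n * x) + PrGe Mx PX (nfloor (INR n * x)) lX).
  - exists 1%nat. intros n Hn. split; [apply PrGe_ge0|].
    rewrite PrT_gt_running. apply (PrGe_target_le hX hY (Hv n)); [lia|].
    pose proof (nfloor_spec (INR n * x) ltac:(pose proof (pos_INR n); nra)) as [Hfl _].
    pose proof (lt_0_INR n ltac:(lia)). unfold lY. nra.
  - apply Un_cv0_plus; [exact Hcv|]. apply (PrGe_floor_mult_cv0 Mx PX HXsup); auto; lra.
Qed.

Lemma opt_rate_ge_inf_ratio (eXinf : is_inf_entropy Mx PX HXinf) (eYinf : is_inf_entropy My PY HYinf)
  (hpos : 0 < HXinf) x :
  opt_rates Mx My PX PY x -> HYinf / HXinf <= x.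
Proof.
  intros [phi [Hv [Hx Hcv]]].
  apply div_le_iff; [lra|]. apply Rnot_lt_le. intros Hlt.
  destruct (exists_gt_mul_lt x HXinf HYinf Hx Hlt) as [lX [HlX HxlX]].
  set (lY := (x * lX + HYinf) / 2). set (R' := (x + lY / lX) / 2).
  assert (HR' : x < R' /\ R' * lX < lY).
  { assert (x < lY / lX) by (apply lt_div_iff; [|unfold lY]; lra).
    split; [|apply (lt_div_iff R' lY lX)]; unfold R'; lra. }
  (* [H_(X)] is a limit along all coin lengths [m], so the algorithm for the
     target length [g m] is run at coin length [m]. *)
  destruct (ceil_div_index x R' ltac:(lra)) as [g [Hg1 [[N HN] Hg3]]].
  apply (PrLe_not_cv0_above Mx PX HXinf lX eXinf HlX).
  apply Un_cv0_le with (fun m => PrT_gt Mx PX (phi (g m)) (INR (g m) * x) + PrLe My PY (g m) lY).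
  - exists (Nat.max N 1). intros m Hm. split; [apply PrLe_ge0|].
    assert (Hgpos : (0 < g m)%nat)
      by (apply INR_lt; pose proof (Hg1 m); pose proof (pos_INR m); simpl; nra).
    eapply Rle_trans; [apply (PrLe_coin_le hX (Hv (g m)) Hgpos m lX lY); [lia|]|].
    + pose proof (Hg1 m). pose proof (lt_0_INR _ Hgpos). nra.
    + apply Rplus_le_compat_r. rewrite PrT_gt_running. apply (Pr_running_mono hX).
      apply nfloor_le; [pose proof (pos_INR (g m)); nra|]. apply HN; lia.
  - apply Un_cv0_plus.
    + exact (Un_cv_comp (fun n => PrT_gt Mx PX (phi n) (INR n * x)) g 0 Hcv Hg3).
    + apply (Un_cv_comp (fun n => PrLe My PY n lY) g); [|exact Hg3].
      apply (PrLe_cv0_below HYinf); [exact eYinf|unfold lY; lra].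
Qed.

End Rates.

Theorem theorem3 (Mx My : nat) (PX PY : list nat -> R)
  (hX : is_process Mx PX) (hY : is_process My PY)
  (HXsup HXinf HYsup HYinf : R)
  (eXsup : is_sup_entropy Mx PX HXsup) (eXinf : is_inf_entropy Mx PX HXinf)
  (eYsup : is_sup_entropy My PY HYsup) (eYinf : is_inf_entropy My PY HYinf)
  (hpos : 0 < HXinf) :
  inf_le (int_rates Mx My PX PY) (HYsup / HXinf) /\
  inf_ge (opt_rates Mx My PX PY) (Rmax (HYsup / HXsup) (HYinf / HXinf)).
Proof.
  split.
  - intros eps He. pose proof (sup_entropy_ge0 My PY HYsup hY eYsup).
    assert (0 <= HYsup / HXinf) by (apply le_div_iff; lra).
    exists (HYsup / HXinf + eps / 2). split; [|lra].
    apply (interval_rate_achievable hX hY eXinf eYsup); [lra|].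
    replace ((HYsup / HXinf + eps / 2) * HXinf) with (HYsup + eps / 2 * HXinf) by (field; lra).
    pose proof (Rmult_lt_0_compat (eps / 2) HXinf ltac:(lra) hpos). lra.
  - intros x Hx. apply Rmax_lub.
    + exact (opt_rate_ge_sup_ratio hX hY eXsup eXinf eYsup hpos x Hx).
    + exact (opt_rate_ge_inf_ratio hX eXinf eYinf hpos x Hx).
Qed.
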